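(* Let $n$ and $d$ be positive integers and let $\vec{G}$ be a digraph of order $n$ whose minimum outdegree is at least $d$. Then $\vec{G}$ contains a subdivision of the complete digraph of order $\lfloor d^2/(8n^{3/2}) \rfloor$.
   Context: Digraphs have no loops, and for any ordered pair of vertices $x,y$ there is at most one edge directed from $x$ to $y$ (there may also be an edge from $y$ to $x$). The complete digraph of order $\ell$ has $\ell$ vertices and, for every ordered pair $(v,w)$ of distinct vertices, an edge directed from $v$ to $w$. A digraph $\vec{H}$ is a subdivision of a digraph $\vec{F}$ if $\vec{H}$ can be obtained from $\vec{F}$ by replacing each edge $\vec{xy}$ of $\vec{F}$ by a directed path from $x$ to $y$, such that the paths corresponding to distinct edges are internally vertex-disjoint (and their interior vertices are new). ''Contains a subdivision'' means has a subdigraph that is a subdivision. *)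

From mathcomp Require Import all_boot all_order all_algebra.
From mathcomp Require Import reals.
Set Implicit Arguments. Unset Strict Implicit. Unset Printing Implicit Defensive.

(* A digraph on a finite vertex type V is an edge relation e : rel V;
   e x y means there is an edge directed from x to y.  At most one edge per
   ordered pair is automatic; "no loops" is the predicate [loopless]. *)
Definition loopless (V : finType) (e : rel V) : Prop := forall x, ~~ e x x.

Definition outdeg (V : finType) (e : rel V) (v : V) : nat := #|[set w | e v w]|.

(* A directed path from x to y in e, given by the sequence p of vertices after x
   (so the path is x :: p, its last vertex is y); it has at least one edge and
   no repeated vertex. *)
Definition dipath (V : finType) (e : rel V) (x y : V) (p : seq V) : Prop :=
  [/\ p != [::], path e x p, last x p = y & uniq (x :: p)].

(* interior vertices of the path x :: p : all of p except its last vertex *)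
Definition inner (V : finType) (x : V) (p : seq V) : seq V := behead (belast x p).

Definition contains_subdivision_complete (V : finType) (e : rel V) (l : nat) : Prop :=
  exists (b : 'I_l -> V) (P : 'I_l -> 'I_l -> seq V),
    [/\ injective b,
        (forall i j, i != j -> dipath e (b i) (b j) (P i j)),
        (forall i j k, i != j -> b k \notin inner (b i) (P i j)) &
        (forall i j i' j', i != j -> i' != j' -> (i, j) != (i', j') ->
           forall x, x \in inner (b i) (P i j) -> x \notin inner (b i') (P i' j'))].

From mathcomp Require Import all_boot all_order all_algebra.
From mathcomp Require Import reals.
From mathcomp Require Import zify ring.
Import Order.TTheory GRing.Theory Num.Theory.
Set Implicit Arguments. Unset Strict Implicit. Unset Printing Implicit Defensive.

(* Choose a nonempty set S of vertices and k such that every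
   vertex of S has at least k out-neighbours in S and k^4 / |S|^3 is maximal;
   then k^4 / |S|^3 >= d^4 / n^3.  In-degrees inside S average at least k, so
   at least l vertices of S have in-degree at least k + 1 - l: these are the
   branch vertices.  The l(l-1) paths are built greedily.  To join x to y while
   avoiding the set U of forbidden vertices (the other branch vertices and the
   interiors of the paths built so far), grow the set of vertices of S \ U
   from which y is reachable inside S \ U, one layer at a time.  While it does
   not cover S \ U, its complement has minimum out-degree at least
   k - |U| - (size of the last layer), so by maximality and AM-GM each layer
   has size at least 3k|reached| / (4|S|) - |U|.  Since the first layer
   already has about k vertices, after 2|S|^2 / k^2 layers everything is
   covered: every path has at most 2|S|^2 / k^2 + 1 interior vertices, which
   keeps |U| small enough for the whole construction. *)

Lemma amgm_1_3 (m c : nat) : 256 * m * c ^ 3 <= (m + 3 * c) ^ 4.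
Proof.
case: (leqP c m) => [le_cm|lt_mc].
  have [t ->] : exists t, m = c + t by exists (m - c); lia.
  have -> : (c + t + 3 * c) ^ 4 =
            256 * (c + t) * c ^ 3 + (96 * c ^ 2 * t ^ 2 + 16 * c * t ^ 3 + t ^ 4).
    by rewrite !expnS expn0; ring.
  exact: leq_addr.
have [t ->] : exists t, c = m + t by exists (c - m); lia.
have -> : (m + 3 * (m + t)) ^ 4 =
          256 * m * (m + t) ^ 3 + (96 * m ^ 2 * t ^ 2 + 176 * m * t ^ 3 + 81 * t ^ 4).
  by rewrite !expnS expn0; ring.
exact: leq_addr.
Qed.

Lemma amgm_ratio (m k d c : nat) : 0 < m ->
  k ^ 4 * m ^ 3 <= d ^ 4 * c ^ 3 -> 4 * m * k <= d * (m + 3 * c).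
Proof.
move=> m_gt0 le_ratio; rewrite -(leq_exp2r _ _ (isT : 0 < 4)).
have -> : (4 * m * k) ^ 4 = 256 * m * (k ^ 4 * m ^ 3) by rewrite !expnS expn0; ring.
rewrite expnMn; apply: leq_trans (_ : 256 * m * (d ^ 4 * c ^ 3) <= _).
  by rewrite leq_mul2l le_ratio orbT.
have -> : 256 * m * (d ^ 4 * c ^ 3) = d ^ 4 * (256 * m * c ^ 3) by ring.
by rewrite leq_mul2l amgm_1_3 orbT.
Qed.

Lemma leq_crossmul_of_rat (a b c d : nat) : 0 < b -> 0 < d ->
  (a%:R / b%:R <= c%:R / d%:R :> rat)%R -> a * d <= c * b.
Proof.
move=> b_gt0 d_gt0; rewrite ler_pdivrMr ?ltr0n // mulrAC ler_pdivlMr ?ltr0n //.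
by rewrite -!natrM ler_nat.
Qed.

Lemma leq_ratio_trans (a n s k D : nat) : 0 < n ->
  a * n <= D -> D * s <= k * n -> a * s <= k.
Proof.
move=> n_gt0 le_aD le_Dk; rewrite -(leq_pmul2r n_gt0).
apply: leq_trans le_Dk; rewrite mulnAC; exact: leq_mul.
Qed.

Lemma card_bigcup_seq_le (I T : finType) (s : seq I) (A : I -> {set T}) c :
  (forall i, i \in s -> #|A i| <= c) -> #|\bigcup_(i <- s) A i| <= size s * c.
Proof.
elim: s => [|i s IHs] A_le; first by rewrite big_nil cards0.
rewrite big_cons mulSn; apply: leq_trans (leq_card_setU _ _) _.
by rewrite leq_add ?A_le ?mem_head // IHs // => j js; rewrite A_le // inE js orbT.
Qed.

Lemma exists_injective_in (T : finType) (A : {set T}) (l : nat) : l <= #|A| ->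
  exists b : 'I_l -> T, injective b /\ forall i, b i \in A.
Proof.
move=> le_lA; exists (fun i => enum_val (widen_ord le_lA i)); split.
  by move=> i j /enum_val_inj /(congr1 val) eq_ij; apply: val_inj.
by move=> i; exact: enum_valP.
Qed.

(* [m] and [d] play the roles of #|S| and k; [budget] is what extremality of
   S yields for l = floor (d^2 / (8 n^(3/2))). *)
Section PathBudget.
Variables (l m d : nat).
Hypotheses (l_ge2 : 2 <= l) (d_lt_m : d < m) (budget : 64 * l ^ 2 * m ^ 3 <= d ^ 4).

Definition path_bound := (2 * m * m) %/ (d * d) + 1.

Lemma budget_m_large : 256 < m.
Proof.
have : 256 * m ^ 3 < m * m ^ 3.
  apply: (@leq_ltn_trans (64 * l ^ 2 * m ^ 3)).
    rewrite leq_mul2r; apply/orP; right.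
    have : 2 ^ 2 <= l ^ 2 by rewrite leq_exp2r.
    lia.
  have -> : m * m ^ 3 = m ^ 4 by rewrite !expnS expn0; ring.
  by apply: leq_ltn_trans budget _; rewrite ltn_exp2r.
by rewrite ltn_mul2r => /andP[].
Qed.

Lemma budget_d_gt0 : 0 < d.
Proof.
have : 0 < 64 * l ^ 2 * m ^ 3 by rewrite !muln_gt0; have := budget_m_large; lia.
by move/leq_trans/(_ budget); rewrite expn_gt0 => /orP[].
Qed.

Lemma budget_ml : 128 * m * l <= d * d.
Proof.
rewrite -(leq_exp2r (128 * m * l) (d * d) (isT : 0 < 2)).
have -> : (d * d) ^ 2 = d ^ 4 by rewrite !expnS expn0; ring.
apply: leq_trans budget.
have -> : (128 * m * l) ^ 2 = 64 * l ^ 2 * m ^ 2 * 256 by rewrite !expnS expn0; ring.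
have -> : 64 * l ^ 2 * m ^ 3 = 64 * l ^ 2 * m ^ 2 * m by rewrite !expnS expn0; ring.
by rewrite leq_mul2l ltnW ?budget_m_large ?orbT.
Qed.

Lemma budget_l_le_d : l <= d.
Proof.
have : m * (128 * l) <= m * d.
  rewrite mulnA [m * 128]mulnC; apply: leq_trans budget_ml _.
  by rewrite [m * d]mulnC leq_mul2l ltnW ?orbT.
by rewrite leq_pmul2l; [lia | have := budget_m_large; lia].
Qed.

Lemma budget_mll : 64 * l * l * m <= d * d.
Proof.
have m2_gt0 : 0 < m * m by rewrite muln_gt0; have := budget_m_large; lia.
rewrite -(leq_pmul2r m2_gt0).
have -> : 64 * l * l * m * (m * m) = 64 * l ^ 2 * m ^ 3 by rewrite !expnS expn0; ring.
apply: leq_trans budget _.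
have -> : d ^ 4 = (d * d) * (d * d) by rewrite !expnS expn0; ring.
by apply: leq_mul => //; apply: leq_mul; exact: ltnW.
Qed.

Lemma path_bound_large : 2 * m * m < path_bound * (d * d).
Proof. by rewrite /path_bound addn1 ltn_ceil // muln_gt0 budget_d_gt0. Qed.

Lemma budget_paths : 128 * m * (l * l * path_bound) <= 6 * (d * d).
Proof.
set q := (2 * m * m) %/ (d * d).
have dd_gt0 : 0 < d * d by rewrite muln_gt0 budget_d_gt0.
have le_q : q * (d * d) <= 2 * m * m by exact: leq_trunc_div.
rewrite -(leq_pmul2r dd_gt0).
have -> : 128 * m * (l * l * (q + 1)) * (d * d) =
          128 * m * (l * l) * (q * (d * d)) + 2 * (64 * l * l * m) * (d * d) by ring.
have -> : 6 * (d * d) * (d * d) = 4 * d ^ 4 + 2 * (d * d) * (d * d).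
  by rewrite !expnS expn0; ring.
apply: leq_add; last by rewrite leq_mul2r leq_mul2l budget_mll !orbT.
apply: leq_trans (_ : 128 * m * (l * l) * (2 * m * m) <= _).
  by rewrite leq_mul2l le_q orbT.
have -> : 128 * m * (l * l) * (2 * m * m) = 4 * (64 * l ^ 2 * m ^ 3).
  by rewrite !expnS expn0; ring.
by rewrite leq_mul2l budget orbT.
Qed.

Lemma budget_total :
  (3 * d + 4 * m) * (l + l * l * path_bound) + 3 * d * l <= d * d.
Proof.
set u := l + l * l * path_bound.
have le_u : 128 * m * u <= 7 * (d * d).
  by rewrite mulnDr; have := budget_ml; have := budget_paths; lia.
have le_dm : (3 * d + 4 * m) * (128 * u) <= 7 * m * (128 * u).
  by rewrite leq_mul2r; apply/orP; right; lia.
have le_dl : d * l <= m * l by rewrite leq_mul2r ltnW ?orbT.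
have := budget_ml; lia.
Qed.

End PathBudget.

Lemma truncn_bound (R : realType) (n d : nat) : (0 < n)%N ->
  (64 * (Num.truncn ((d%:R ^+ 2) / (8 * n%:R * Num.sqrt (n%:R : R)))) ^ 2 * n ^ 3
   <= d ^ 4)%N.
Proof.
move=> n_gt0; set s := Num.sqrt (n%:R : R).
have s_gt0 : (0 < s)%R by rewrite sqrtr_gt0 ltr0n.
have s2 : (s ^+ 2 = n%:R)%R by rewrite sqr_sqrtr // ler0n.
set x := ((d%:R ^+ 2) / (8 * n%:R * s))%R.
have den_gt0 : (0 < 8 * n%:R * s :> R)%R by rewrite !mulr_gt0 // ltr0n.
have x_ge0 : (0 <= x)%R by rewrite divr_ge0 ?exprn_ge0 ?ler0n ?ltW.
set t := Num.truncn x.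
have le_tx : (t%:R <= x)%R by rewrite /t truncn_le x_ge0.
have le_t : (t%:R * (8 * n%:R * s) <= d%:R ^+ 2 :> R)%R by rewrite -ler_pdivlMr.
rewrite -(@ler_nat R) !natrM.
have -> : (64 * (t%:R * t%:R) * (n%:R * (n%:R * n%:R)) : R)%R =
          ((t%:R * (8 * n%:R * s)) ^+ 2)%R by rewrite -s2; ring.
have -> : (d%:R * (d%:R * (d%:R * d%:R)) : R)%R = ((d%:R ^+ 2) ^+ 2)%R by ring.
by rewrite ler_pXn2r // ?nnegrE // mulr_ge0 // ltW.
Qed.

Section Digraph.
Variables (V : finType) (e : rel V).

Definition outnbr (T : {set V}) v := [set w in T | e v w].
Definition innbr (T : {set V}) v := [set w in T | e w v].
Definition outdeg_geq (T : {set V}) k := forall v, v \in T -> k <= #|outnbr T v|.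
Definition extremal (S : {set V}) k := forall T j,
  T != set0 -> outdeg_geq T j -> j ^ 4 * #|S| ^ 3 <= k ^ 4 * #|T| ^ 3.

Lemma inner_sub (x : V) p : {subset inner x p <= p}.
Proof. by case: p => [|a p] //= z /mem_belast; rewrite inE. Qed.

Lemma size_inner (x : V) p : size (inner x p) = (size p).-1.
Proof. by rewrite /inner size_behead size_belast. Qed.

Lemma dipath_notin_inner (x y : V) p :
  dipath e x y p -> x \notin inner x p /\ y \notin inner x p.
Proof.
case=> _ _ <- p_uniq; split.
  by apply/negP => /inner_sub; move: p_uniq => /= /andP[/negP].
case: p p_uniq => [|a p] //; rewrite cons_uniq => /andP[_].
by rewrite {1}lastI rcons_uniq => /andP[].
Qed.

Fixpoint reach (W : {set V}) (y : V) (r : nat) : {set V} :=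
  if r is r'.+1 then reach W y r' :|: [set v in W | [exists w in reach W y r', e v w]]
  else [set y].

Lemma reachS (W : {set V}) (y : V) r :
  reach W y r.+1 = reach W y r :|: [set v in W | [exists w in reach W y r, e v w]].
Proof. by []. Qed.

Lemma reach_sub (W : {set V}) (y : V) r : y \in W -> reach W y r \subset W.
Proof.
move=> yW; elim: r => [|r IHr] /=; first by rewrite sub1set.
by rewrite subUset IHr; apply/subsetP => v; rewrite inE => /andP[].
Qed.

Lemma subset_reach (W : {set V}) (y : V) r s : r <= s -> reach W y r \subset reach W y s.
Proof.
move=> le_rs; rewrite -(subnKC le_rs); elim: (s - r) => [|t IHt]; first by rewrite addn0.
by rewrite addnS /=; apply: subset_trans IHt (subsetUl _ _).
Qed.

Lemma reach_path (W : {set V}) (y : V) r v : v \in reach W y r -> exists p,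
  [/\ path e v p, last v p = y, uniq (v :: p), {subset v :: p <= reach W y r}
    & size p <= r].
Proof.
elim: r v => [|r IHr] v.
  by rewrite inE => /eqP ->; exists [::]; split => // z; rewrite !inE.
have [vr _|vr] := boolP (v \in reach W y r).
  have [p [p_path p_last p_uniq p_sub p_size]] := IHr v vr.
  exists p; split => //; last exact: leqW.
  by move=> z /p_sub zr; rewrite reachS inE zr.
rewrite reachS inE (negbTE vr) orFb inE => /andP[vW /existsP[w /andP[wr evw]]].
have [p [p_path p_last p_uniq p_sub p_size]] := IHr w wr.
exists (w :: p); split => //.
- by rewrite /= evw.
- by rewrite cons_uniq p_uniq andbT; exact: contra (p_sub v) vr.
- move=> z; rewrite inE => /orP[/eqP ->|/p_sub zr]; rewrite inE ?zr //.
  by rewrite inE vW /=; apply/orP; right; apply/existsP; exists w; rewrite wr evw.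
Qed.

Section Growth.
Variables (S : {set V}) (k : nat).
Hypotheses (S_k : outdeg_geq S k) (S_ext : extremal S k).
Variables (U : {set V}) (y : V).
Hypothesis yW : y \in S :\: U.
Local Notation W := (S :\: U).
Local Notation L := (reach W y).

Lemma reach_subS r : L r \subset S.
Proof. exact: subset_trans (reach_sub r yW) (subsetDl _ _). Qed.

Lemma outdeg_geq_unreached r :
  outdeg_geq (W :\: L r.+1) (k - #|U| - (#|L r.+1| - #|L r|)).
Proof.
set C := W :\: L r.+1; move=> z zC.
have [zr zU zS] : [/\ z \notin L r.+1, z \notin U & z \in S].
  by move: zC; rewrite !inE => /and3P[].
have out_cover : outnbr S z \subset U :|: (L r.+1 :\: L r) :|: outnbr C z.
  apply/subsetP => w; rewrite inE => /andP[wS ezw].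
  have [wr|wr] := boolP (w \in L r).
    case/negP: zr; rewrite reachS in_setU in_set in_setD zU zS /=.
    by apply/orP; right; apply/existsP; exists w; rewrite wr.
  have [wU|wU] := boolP (w \in U); first by apply/setUP; left; apply/setUP; left.
  have [wr1|wr1] := boolP (w \in L r.+1).
    by apply/setUP; left; apply/setUP; right; apply/setDP.
  by apply/setUP; right; apply/setIdP; split => //; apply/setDP; split => //; apply/setDP.
have card_new : #|L r.+1 :\: L r| = #|L r.+1| - #|L r| by rewrite cardsDS ?subset_reach.
have := leq_trans (S_k zS) (subset_leq_card out_cover).
have := leq_of_leqif (leq_card_setU (U :|: (L r.+1 :\: L r)) (outnbr C z)).
have := leq_of_leqif (leq_card_setU U (L r.+1 :\: L r)).
by rewrite card_new; lia.
Qed.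

Lemma reach_grow r : ~~ (W \subset L r.+1) ->
  3 * k * #|L r.+1| <= 4 * #|S| * (#|L r.+1| - #|L r| + #|U|).
Proof.
move=> uncovered; set C := W :\: L r.+1.
have C_gt0 : C != set0 by rewrite setD_eq0.
have S_gt0 : 0 < #|S| by apply/card_gt0P; exists y; case/setDP: yW.
have := amgm_ratio S_gt0 (S_ext C_gt0 (@outdeg_geq_unreached r)).
have le_C : #|C| + #|L r.+1| <= #|S|.
  have := subset_leq_card (setSD (L r.+1) (subsetDl S U)).
  by rewrite (cardsDS (reach_subS r.+1)) -/C; have := subset_leq_card (reach_subS r.+1); lia.
have := subset_leq_card (subset_reach W y (leqnSn r)).
move: le_C; move: #|C| #|L r.+1| #|L r| #|U| #|S| => c a b u m le_C le_ba.
have le_am : a <= m by lia.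
by case: (leqP k (u + (a - b))) => [le_k _|]; nia.
Qed.

Lemma reach_linear r : W \subset L r.+1 \/
  4 * #|S| * #|L 1| + r * (3 * k * #|L 1| - 4 * #|S| * #|U|) <= 4 * #|S| * #|L r.+1|.
Proof.
elim: r => [|r [covered|IHr]]; first by right; rewrite mul0n addn0.
  by left; apply: subset_trans covered (subset_reach _ _ (leqnSn _)).
have [covered|uncovered] := boolP (W \subset L r.+2); [by left | right].
have := reach_grow uncovered.
have := subset_leq_card (subset_reach W y (leqnSn r.+1)).
have := subset_leq_card (subset_reach W y (isT : 1 <= r.+2)).
move: IHr; move: #|L 1| #|L r.+1| #|L r.+2| #|U| (4 * #|S|) => a b c u M.
move=> IHr le_ac le_bc grow; rewrite mulSn addnCA.
have le_k : k * a <= k * c by rewrite leq_mul2l le_ac orbT.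
have : M * (c - b + u) = M * c - M * b + M * u by rewrite mulnDr mulnBr.
have : M * b <= M * c by rewrite leq_mul2l le_bc orbT.
lia.
Qed.

Hypothesis e_loopless : loopless e.

Lemma card_reach1 : #|innbr S y| + 1 <= #|L 1| + #|U|.
Proof.
have sub : y |: (innbr S y :\: U) \subset L 1.
  apply/subsetP => z; rewrite reachS !inE => /orP[->//|/and3P[zU zS ezy]].
  by rewrite zU zS /=; apply/orP; right; apply/existsP; exists y; rewrite inE eqxx.
have := subset_leq_card sub.
rewrite cardsU1 !inE (negbTE (e_loopless y)) !andbF cardsD /=.
by have := subset_leq_card (subsetIr (innbr S y) U); lia.
Qed.

Lemma short_path x l P : x \in W -> x != y ->
  k + 1 <= #|innbr S y| + l ->
  (3 * k + 4 * #|S|) * #|U| + 3 * k * l <= k * k ->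
  2 * #|S| * #|S| < P * (k * k) ->
  exists2 p, dipath e x y p & {subset p <= W} /\ size p <= P.+1.
Proof.
move=> xW xy y_indeg U_small P_large.
case: (reach_linear P) => [covered|grown].
  have [p [p_path p_last p_uniq p_sub p_size]] := reach_path (subsetP covered x xW).
  exists p; last split => // z zp.
    by split => //; apply: contraNneq xy => p0; rewrite -p_last p0.
  by apply: subsetP (reach_sub P.+1 yW) _ (p_sub z _); rewrite inE zp orbT.
have := subset_leq_card (reach_subS P.+1); have := card_reach1.
move: grown y_indeg U_small P_large.
move: #|L 1| #|L P.+1| #|U| #|S| #|innbr S y| => a1 a u m i.
move=> grown y_indeg U_small P_large reach1 le_am.
have first_layer : 2 * (k * k) + 4 * m * u <= 3 * k * a1 by nia.
have : P * (2 * (k * k)) <= P * (3 * k * a1 - 4 * m * u).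
  by rewrite leq_mul2l; apply/orP; right; lia.
have : 4 * m * a <= 4 * m * m by rewrite leq_mul2l le_am orbT.
lia.
Qed.

End Growth.

Section Paths.
Variables (S : {set V}) (k l P : nat) (b : 'I_l -> V).
Hypotheses (e_loopless : loopless e) (S_k : outdeg_geq S k) (S_ext : extremal S k).
Hypotheses (b_inj : injective b) (bS : forall i, b i \in S).
Hypothesis b_indeg : forall i, k + 1 <= #|innbr S (b i)| + l.
Hypothesis budget : (3 * k + 4 * #|S|) * (l + l * l * P) + 3 * k * l <= k * k.
Hypothesis P_large : 2 * #|S| * #|S| < P * (k * k).

Definition interior (Pth : 'I_l -> 'I_l -> seq V) (q : 'I_l * 'I_l) : {set V} :=
  [set x in inner (b q.1) (Pth q.1 q.2)].

Definition linked (Q : seq ('I_l * 'I_l)) Pth :=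
  [/\ forall q, q \in Q -> dipath e (b q.1) (b q.2) (Pth q.1 q.2),
      forall q, q \in Q -> #|interior Pth q| <= P,
      forall q h, q \in Q -> b h \notin interior Pth q &
      forall q q', q \in Q -> q' \in Q -> q != q' ->
        forall x, x \in interior Pth q -> x \notin interior Pth q'].

Definition forbidden i j Q Pth : {set V} :=
  b @: [set h | (h != i) && (h != j)] :|: \bigcup_(q <- Q) interior Pth q.

Lemma card_forbidden i j Q Pth : linked Q Pth -> size Q <= l * l ->
  #|forbidden i j Q Pth| <= l + l * l * P.
Proof.
case=> _ Q_size _ _ le_Q; apply: leq_trans (leq_card_setU _ _) _; apply: leq_add.
  by rewrite (leq_trans (leq_imset_card _ _)) // (leq_trans (max_card _)) ?card_ord.
apply: leq_trans (card_bigcup_seq_le Q_size) _.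
by rewrite leq_mul2r le_Q orbT.
Qed.

Lemma branch_notin_forbidden i j Q Pth h : linked Q Pth ->
  (h == i) || (h == j) -> b h \notin forbidden i j Q Pth.
Proof.
case=> _ _ Q_avoid _ h_ij; rewrite in_setU negb_or; apply/andP; split.
  apply/imsetP => -[h' ]; rewrite inE => /andP[h'i h'j] /b_inj eq_h.
  by move: h_ij; rewrite eq_h (negbTE h'i) (negbTE h'j).
by rewrite bigcup_seq; apply/bigcupP => -[q qQ]; apply/negP; exact: Q_avoid.
Qed.

Lemma avoiding_path i j Q Pth : linked Q Pth -> size Q <= l * l -> i != j ->
  exists2 p, dipath e (b i) (b j) p &
    {subset p <= S :\: forbidden i j Q Pth} /\ size p <= P.+1.
Proof.
move=> Q_linked le_Q ij.
have outside h : (h == i) || (h == j) -> b h \in S :\: forbidden i j Q Pth.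
  by move=> h_ij; rewrite in_setD bS andbT branch_notin_forbidden.
apply: (short_path S_k S_ext _ e_loopless _ _ (b_indeg j) _ P_large).
- by apply: outside; rewrite eqxx orbT.
- by apply: outside; rewrite eqxx.
- by apply: contra ij => /eqP /b_inj ->.
apply: leq_trans budget; rewrite leq_add2r leq_mul2l.
by rewrite card_forbidden ?orbT.
Qed.

Lemma linked_cons i j Q Pth : (i, j) \notin Q -> i != j -> size Q < l * l ->
  linked Q Pth -> exists Pth', linked ((i, j) :: Q) Pth'.
Proof.
move=> ijQ ij lt_Q Q_linked.
have [p ij_path [p_sub p_size]] := avoiding_path Q_linked (ltnW lt_Q) ij.
have p_avoid x : x \in inner (b i) p -> x \notin forbidden i j Q Pth.
  by move=> /inner_sub /p_sub; rewrite in_setD => /andP[].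
pose Pth' i' j' := if (i', j') == (i, j) then p else Pth i' j'.
have Pth'_ij : interior Pth' (i, j) = [set x in inner (b i) p].
  by rewrite /interior /Pth' eqxx.
have Pth'_Q q : q \in Q -> Pth' q.1 q.2 = Pth q.1 q.2.
  move=> qQ; rewrite /Pth' -surjective_pairing ifN //.
  by apply: contraNneq ijQ => <-.
have interior_Q q : q \in Q -> interior Pth' q = interior Pth q.
  by move=> qQ; rewrite /interior Pth'_Q.
have forbidden_Q q x : q \in Q -> x \in interior Pth q -> x \in forbidden i j Q Pth.
  by move=> qQ xq; rewrite in_setU; apply/orP; right; rewrite bigcup_seq; apply/bigcupP; exists q.
case: Q_linked => Q_path Q_size Q_avoid Q_disj; exists Pth'; split.
- move=> q; rewrite inE => /orP[/eqP ->|qQ] /=; first by rewrite /Pth' eqxx.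
  by rewrite Pth'_Q //; exact: Q_path.
- move=> q; rewrite inE => /orP[/eqP ->|qQ]; last by rewrite interior_Q ?Q_size.
  rewrite Pth'_ij cardsE (leq_trans (card_size _)) // size_inner.
  by move: p_size; case: (size p).
- move=> q h; rewrite inE => /orP[/eqP ->|qQ]; last by rewrite interior_Q ?Q_avoid.
  rewrite Pth'_ij inE; have [i_out j_out] := dipath_notin_inner ij_path.
  have [/orP[]/eqP-> //|h_ij] := boolP ((h == i) || (h == j)).
  apply: (contraL (p_avoid (b h))); rewrite in_setU; apply/orP; left.
  by apply/imsetP; exists h; rewrite // inE -negb_or.
- move=> q q'; rewrite !inE => /orP[/eqP ->|qQ] /orP[/eqP ->|q'Q] //=.
  + by rewrite eqxx.
  + move=> _ x; rewrite Pth'_ij interior_Q // inE => /p_avoid.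
    by apply: contra => /(forbidden_Q _ _ q'Q).
  + move=> _ x; rewrite Pth'_ij interior_Q // inE => /(forbidden_Q _ _ qQ) x_forb.
    by apply/negP => /p_avoid; rewrite x_forb.
  + by rewrite !interior_Q //; exact: Q_disj.
Qed.

Lemma linked_seq Q : uniq Q -> {in Q, forall q, q.1 != q.2} -> size Q <= l * l ->
  exists Pth, linked Q Pth.
Proof.
elim: Q => [|[i j] Q IHQ] /=; first by exists (fun _ _ => [::]); split.
move=> /andP[ijQ Q_uniq] Q_diag le_Q.
have [q qQ|Pth Q_linked] := IHQ Q_uniq _ (ltnW le_Q).
  by apply: Q_diag; rewrite inE qQ orbT.
exact: linked_cons ijQ (Q_diag _ (mem_head _ _)) le_Q Q_linked.
Qed.

Lemma subdivision_complete_of_branch : contains_subdivision_complete e l.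
Proof.
pose Q := enum [set q : 'I_l * 'I_l | q.1 != q.2].
have Q_diag : {in Q, forall q, q.1 != q.2} by move=> q; rewrite mem_enum inE.
have le_Q : size Q <= l * l.
  by rewrite -cardE (leq_trans (max_card _)) // card_prod card_ord.
have [Pth [Q_path _ Q_avoid Q_disj]] := linked_seq (enum_uniq _) Q_diag le_Q.
have inQ i j : i != j -> (i, j) \in Q by move=> ij; rewrite mem_enum inE.
exists b, Pth; split => // [i j ij|i j h ij|i j i' j' ij i'j' ne x x_in].
- exact: (Q_path (i, j) (inQ _ _ ij)).
- by have := Q_avoid (i, j) h (inQ _ _ ij); rewrite inE.
- have := Q_disj _ _ (inQ _ _ ij) (inQ _ _ i'j') ne x; rewrite !inE; exact.
Qed.

End Paths.

Lemma card_set_predE (S : {set V}) (p : pred V) : #|[set w in S | p w]| = \sum_(w in S) p w.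
Proof.
rewrite -sum1_card (eq_bigl (fun w => (w \in S) && p w)) => [|w]; last by rewrite inE.
by rewrite big_mkcondr /=; apply: eq_bigr => w _; case: (p w).
Qed.

Lemma sum_card_outnbr (S : {set V}) :
  \sum_(v in S) #|outnbr S v| = \sum_(v in S) #|innbr S v|.
Proof.
rewrite (eq_bigr (fun v => \sum_(w in S) (e v w : nat))) => [|v _]; last first.
  exact: card_set_predE.
by rewrite exchange_big; apply: eq_bigr => v _; rewrite card_set_predE.
Qed.

Lemma card_high_indeg (S : {set V}) k l : S != set0 -> outdeg_geq S k -> l <= k ->
  l <= #|[set v in S | k + 1 <= #|innbr S v| + l]|.
Proof.
move=> S_gt0 S_k le_lk; set H := [set v in S | _].
have HS : H \subset S by apply/subsetP => v; rewrite inE => /andP[].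
have le_sum : #|S| * k <= #|H| * #|S| + #|S| * (k - l).
  have : #|S| * k <= \sum_(v in S) #|innbr S v|.
    by rewrite -sum_card_outnbr -sum_nat_const; apply: leq_sum => v; exact: S_k.
  move/leq_trans; apply; rewrite (big_setID H) (setIidPr HS) /=.
  apply: leq_add.
    rewrite -sum_nat_const; apply: leq_sum => v _; apply: subset_leq_card.
    by apply/subsetP => w; rewrite inE => /andP[].
  apply: leq_trans (_ : #|S :\: H| * (k - l) <= _).
    rewrite -sum_nat_const; apply: leq_sum => v; rewrite !inE => /andP[vH vS].
    by move: vH; rewrite vS /= -ltnNge; lia.
  by rewrite leq_mul2r subset_leq_card ?subsetDl ?orbT.
have S_pos : 0 < #|S| by rewrite card_gt0.
rewrite -(leq_pmul2l S_pos); move: le_sum; rewrite mulnBr [#|H| * _]mulnC.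
have : #|S| * l <= #|S| * k by rewrite leq_mul2l le_lk orbT.
lia.
Qed.

Lemma branch_vertices (S : {set V}) k l : S != set0 -> outdeg_geq S k -> l <= k ->
  exists b : 'I_l -> V, [/\ injective b, forall i, b i \in S &
    forall i, k + 1 <= #|innbr S (b i)| + l].
Proof.
move=> S_gt0 S_k le_lk.
have [b [b_inj bH]] := exists_injective_in (card_high_indeg S_gt0 S_k le_lk).
by exists b; split => // i; have := bH i; rewrite inE => /andP[].
Qed.

Lemma outdeg_geq_le_card T j : T != set0 -> outdeg_geq T j -> j <= #|V|.
Proof. by case/set0Pn => v vT /(_ v vT) /leq_trans; apply; exact: max_card. Qed.

Lemma exists_extremal S0 k0 : S0 != set0 -> outdeg_geq S0 k0 ->
  exists S k, [/\ S != set0, outdeg_geq S k,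
    k0 ^ 4 * #|S| ^ 3 <= k ^ 4 * #|S0| ^ 3 & extremal S k].
Proof.
move=> S0_gt0 S0_k0.
pose admissible := [pred p : {set V} * 'I_#|V|.+1 |
  (p.1 != set0) && [forall v in p.1, (p.2 : nat) <= #|outnbr p.1 v|]].
pose ratio (p : {set V} * 'I_#|V|.+1) := (((p.2 : nat) ^ 4)%:R / (#|p.1| ^ 3)%:R)%R : rat.
have admissibleP T j : T != set0 -> outdeg_geq T j -> admissible (T, inord j).
  move=> T_gt0 T_j; rewrite /= T_gt0 inordK ?ltnS ?(outdeg_geq_le_card T_gt0 T_j) //.
  exact/forall_inP.
have [[S k] /andP[/= S_gt0 /forall_inP S_k] S_max] :=
  arg_maxP ratio (admissibleP _ _ S0_gt0 S0_k0).
have S_ext : extremal S k.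
  move=> T j T_gt0 T_j; have := S_max _ (admissibleP _ _ T_gt0 T_j).
  rewrite /ratio /= inordK ?ltnS ?(outdeg_geq_le_card T_gt0 T_j) //.
  by apply: leq_crossmul_of_rat; rewrite expn_gt0 card_gt0 ?T_gt0 ?S_gt0.
by exists S, k; split => //; apply: S_ext.
Qed.

Lemma outdeg_lt_card T j : loopless e -> T != set0 -> outdeg_geq T j -> j < #|T|.
Proof.
move=> e_loopless /set0Pn[v vT] /(_ v vT) le_j.
have sub : outnbr T v \subset T :\ v.
  apply/subsetP => w; rewrite !inE => /andP[wT evw]; rewrite wT andbT.
  by apply: contraTneq evw => ->; exact: e_loopless.
by have := subset_leq_card sub; rewrite (cardsD1 v T) vT; lia.
Qed.

Lemma outdeg_geq_setT d : (forall v, d <= outdeg e v) -> outdeg_geq [set: V] d.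
Proof.
move=> outd v _; rewrite /outnbr (eq_finset (fun w => e v w)) => [|w]; last first.
  by rewrite inE.
exact: outd.
Qed.

Lemma subdivision_complete_le1 l (x0 : V) : l <= 1 -> contains_subdivision_complete e l.
Proof.
move=> le_l1; have ord_eq (i j : 'I_l) : i = j.
  by apply: ord_inj; have := ltn_ord i; have := ltn_ord j; lia.
exists (fun _ => x0), (fun _ _ => [::]); split => [i j _|i j|i j k|i j i' j'];
  by rewrite ?(ord_eq i j) ?eqxx.
Qed.

End Digraph.

Local Open Scope ring_scope.

Theorem theorem2 (R : realType) (V : finType) (e : rel V) (n d : nat) :
  (0 < n)%N -> (0 < d)%N -> loopless e -> #|V| = n ->
  (forall v : V, (d <= outdeg e v)%N) ->
  contains_subdivision_complete e
    (Num.truncn ((d%:R ^+ 2) / (8 * n%:R * Num.sqrt (n%:R : R)))).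
Proof.
move=> n_gt0 d_gt0 e_loopless card_V outd.
have := truncn_bound R d n_gt0; move: (Num.truncn _) => l l_budget.
have [x0 _] : exists x0 : V, true by move: n_gt0; rewrite -card_V => /card_gt0P[x].
have [l_le1|l_gt1] := leqP l 1; first exact: subdivision_complete_le1 x0 _.
have V_gt0 : [set: V] != set0 by apply/set0Pn; exists x0.
have [S [k [S_gt0 S_k S_ratio S_ext]]] := exists_extremal V_gt0 (outdeg_geq_setT outd).
have S_budget : (64 * l ^ 2 * #|S| ^ 3 <= k ^ 4)%N.
  by apply: leq_ratio_trans l_budget _; rewrite ?expn_gt0 ?n_gt0 // -card_V -cardsT.
have k_lt_S := outdeg_lt_card e_loopless S_gt0 S_k.
have [b [b_inj bS b_indeg]] :=
  branch_vertices S_gt0 S_k (budget_l_le_d l_gt1 k_lt_S S_budget).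
exact: subdivision_complete_of_branch e_loopless S_k S_ext b_inj bS b_indeg
  (budget_total l_gt1 k_lt_S S_budget) (path_bound_large l_gt1 k_lt_S S_budget).
Qed.
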